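(* Let $\Gamma$ be the integer Heisenberg group, with elements written $(a,b,c)$, and let $p\ge2$ be a prime. The map $\varphi_p(a,b,c)=(pa,pb,p^2c)$ is an injective homomorphism $\Gamma\to\Gamma$, and the chain $\Gamma_\ell=\varphi_p^\ell(\Gamma)=\{(p^\ell a,p^\ell b,p^{2\ell}c):a,b,c\in\mathbb{Z}\}$ satisfies: the normal core of $\Gamma_\ell$ is $C_\ell=\{(p^{2\ell}a,p^{2\ell}b,p^{2\ell}c)\}$; the profinite completion $\widehat{\Gamma}_\infty=\varprojlim\Gamma/C_\ell$ has Steinitz order $p^\infty$; and although each quotient $\Gamma_\ell/C_\ell$ is nontrivial for $\ell>0$, the discriminant $D_\infty=\varprojlim\Gamma_\ell/C_\ell$ is the trivial group.
   Context: The integer Heisenberg group consists of the matrices $\begin{pmatrix}1&a&c\\0&1&b\\0&0&1\end{pmatrix}$, $a,b,c\in\mathbb{Z}$, denoted $(a,b,c)$; the product is $(a,b,c)(a',b',c')=(a+a',b+b',c+c'+ab')$. The normal core of a subgroup $H$ is $\bigcap_{g\in\Gamma}gHg^{-1}$. For a descending chain $\Gamma_\ell$ of finite-index subgroups with cores $C_\ell$, the discriminant is $D_\infty=\varprojlim\{\Gamma_{\ell+1}/C_{\ell+1}\to\Gamma_\ell/C_\ell\}\subset\widehat{\Gamma}_\infty$, with the maps induced by inclusion. The Steinitz order of a profinite group $\mathfrak{G}$ is $\mathrm{lcm}\{\#\mathfrak{G}/\mathfrak{N}:\mathfrak{N}\text{ open normal}\}$ as a supernatural number. *)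

From mathcomp Require Import all_boot all_algebra.
Set Implicit Arguments. Unset Strict Implicit. Unset Printing Implicit Defensive.
Import GRing.Theory Num.Theory.
Local Open Scope ring_scope.

(** The integer Heisenberg group: (a,b,c) stands for [[1,a,c],[0,1,b],[0,0,1]]. *)
Definition heis := (int * int * int)%type.

Definition hmul (x y : heis) : heis :=
  let: (a, b, c) := x in let: (a', b', c') := y in (a + a', b + b', c + c' + a * b').
Definition hone : heis := (0, 0, 0).
Definition hinv (x : heis) : heis := let: (a, b, c) := x in (- a, - b, - c + a * b).

Definition phi (p : nat) (x : heis) : heis :=
  let: (a, b, c) := x in (p%:Z * a, p%:Z * b, (p%:Z ^+ 2) * c).

Definition Gam (p l : nat) (y : heis) : Prop := exists x, y = iter l (phi p) x.

(** Normal core of a subgroup H: intersection of all g H g^{-1}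
    (x \in g H g^{-1} iff g^{-1} x g \in H). *)
Definition core (H : heis -> Prop) (x : heis) : Prop :=
  forall g, H (hmul (hmul (hinv g) x) g).

(** Inverse limits of the quotients G_l / C_l (left cosets x C_l), elements
    being represented by compatible sequences of representatives x : nat -> heis.
    The bonding map sends x C_{l+1} to x C_l, so compatibility reads
    x_l^{-1} x_{l+1} \in C_l. *)
Definition compat (C : nat -> heis -> Prop) (x : nat -> heis) : Prop :=
  forall l, C l (hmul (hinv (x l)) (x l.+1)).

Definition lim_eq (C : nat -> heis -> Prop) (x y : nat -> heis) : Prop :=
  forall l, C l (hmul (hinv (x l)) (y l)).

Definition smul (x y : nat -> heis) : nat -> heis := fun l => hmul (x l) (y l).
Definition sinv (x : nat -> heis) : nat -> heis := fun l => hinv (x l).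
Definition sone : nat -> heis := fun _ => hone.

(** A subgroup of an inverse limit of finite discrete groups is open iff it
    contains one of the basic open neighbourhoods of the identity, namely the
    kernel of a projection to Gamma / C_l. *)
Definition open_normal (C : nat -> heis -> Prop) (N : (nat -> heis) -> Prop) : Prop :=
  (forall x, N x -> compat C x) /\
  (forall x y, compat C y -> lim_eq C x y -> N x -> N y) /\
  N sone /\
  (forall x y, N x -> N y -> N (smul x y)) /\
  (forall x, N x -> N (sinv x)) /\
  (forall g x, compat C g -> N x -> N (smul (smul (sinv g) x) g)) /\
  (exists l, forall x, compat C x -> C l (x l) -> N x).

Definition has_index (C : nat -> heis -> Prop) (N : (nat -> heis) -> Prop) (n : nat) : Prop :=
  exists t : 'I_n -> (nat -> heis),
    (forall i, compat C (t i)) /\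
    (forall g, compat C g -> exists! i : 'I_n, N (smul (sinv (t i)) g)).

Definition completion_indices (C : nat -> heis -> Prop) (n : nat) : Prop :=
  exists N, open_normal C N /\ has_index C N n.

(** Supernatural numbers: prime q |-> exponent in nat or infinity (None). *)
Definition supernat := nat -> option nat.

Definition is_supernat_lcm (S : nat -> Prop) (s : supernat) : Prop :=
  forall q, prime q ->
    match s q with
    | None => forall e, exists n, S n /\ (e <= logn q n)%N
    | Some e => (forall n, S n -> (logn q n <= e)%N) /\
                (forall e', (forall n, S n -> (logn q n <= e')%N) -> (e <= e')%N)
    end.

Definition completion_steinitz (C : nat -> heis -> Prop) (s : supernat) : Prop :=
  is_supernat_lcm (completion_indices C) s.

Definition p_infty (p : nat) : supernat := fun q => if q == p then None else Some 0%N.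

(** Discriminant D_oo = lim G_l / C_l (maps induced by inclusion) is trivial:
    every compatible sequence with x_l \in G_l represents the identity. *)
Definition discriminant_trivial (G C : nat -> heis -> Prop) : Prop :=
  forall x : nat -> heis, compat C x -> (forall l, G l (x l)) -> forall l, C l (x l).

(* Write C_l for the normal core of Gamma_l = phi_p^l(Gamma).
   1. Iterating phi gives Gamma_l explicitly, and since the conjugate of
      (a,b,c) by g is (a, b, c - g_1 b + a g_2), an element lies in every
      conjugate of Gamma_l iff all three coordinates are divisible by p^(2l):
      C_l is the subgroup "divisible by p^(2l)" (lemma [core_Dv]).
   2. These subgroups are normal and decreasing, so compatible sequences
      (x_l^-1 x_(l+1) in C_l) satisfy x_l^-1 x_m in C_l for all l <= m.  A
      compatible sequence with x_m in Gamma_m has x_(2l) in C_l, whence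
      x_l in C_l: the discriminant is trivial.
   3. Steinitz order.  For every e, the sequences whose e-th term has first
      coordinate divisible by p^e form an open normal subgroup of index p^e,
      so p^infty divides the order.  Conversely, any open normal subgroup N
      contains the kernel of the projection to Gamma/C_L; every element g has
      g^(p^(2L+1)) in C_L, so the permutation group induced by left
      multiplication on the transversal of N is a p-group acting
      transitively, and the index of N is a power of p. *)
From mathcomp Require Import all_boot all_order all_algebra all_fingroup all_solvable ring.
From Stdlib Require Import ClassicalEpsilon.
Import Order.TTheory GRing.Theory Num.Theory.
Local Open Scope ring_scope.

Ltac hdes := repeat match goal with
  | x : heis |- _ => let a := fresh "a" in let b := fresh "b" in let c := fresh "c" in
      case: x => [[a b] c] end.
Ltac hring := hdes; rewrite /hmul /hinv /hone /=; congr (_,_,_); ring.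

Lemma hmulVl x : hmul (hinv x) x = hone. Proof. hring. Qed.

Lemma fst_hmul x y : (hmul x y).1.1 = x.1.1 + y.1.1. Proof. by hdes. Qed.
Lemma fst_hinv x : (hinv x).1.1 = - x.1.1. Proof. by hdes. Qed.

Lemma conj_coords (g y : heis) : hmul (hmul (hinv g) y) g =
  (y.1.1, y.1.2, y.2 - g.1.1 * y.1.2 + y.1.1 * g.1.2).
Proof. hring. Qed.

Lemma quot_mul x y x' y' : hmul (hinv (hmul x y)) (hmul x' y') =
  hmul (hmul (hmul (hinv y) (hmul (hinv x) x')) y) (hmul (hinv y) y').
Proof. hring. Qed.
Lemma quot_inv x x' : hmul (hinv (hinv x)) (hinv x') =
  hmul (hmul (hinv (hinv x)) (hinv (hmul (hinv x) x'))) (hinv x).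
Proof. hring. Qed.
Lemma quot_trans a b c : hmul (hinv a) c = hmul (hmul (hinv a) b) (hmul (hinv b) c).
Proof. hring. Qed.
Lemma mul_quot_inv a b : a = hmul b (hinv (hmul (hinv a) b)).
Proof. hring. Qed.

(** * The subgroups Gamma_l *)

Lemma iter_phi p l a b c : iter l (phi p) (a, b, c) =
  ((p ^ l)%N%:Z * a, (p ^ l)%N%:Z * b, (p ^ (2 * l))%N%:Z * c).
Proof.
elim: l => [|l IH] /=; first by rewrite !mul1r.
rewrite IH /phi -!natz !natrX mulnS !exprS; congr (_,_,_); ring.
Qed.

Lemma GamE p l y : Gam p l y <->
  exists a b c : int, y = ((p ^ l)%N%:Z * a, (p ^ l)%N%:Z * b, (p ^ (2 * l))%N%:Z * c).
Proof.
split=> [[x ->]|[a [b [c ->]]]].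
  by case: x => [[a b] c]; rewrite iter_phi; exists a, b, c.
by exists (a, b, c); rewrite iter_phi.
Qed.

Lemma Gam_dvd p l y : Gam p l y <->
  [&& ((p ^ l)%N%:Z %| y.1.1)%Z, ((p ^ l)%N%:Z %| y.1.2)%Z & ((p ^ (2 * l))%N%:Z %| y.2)%Z].
Proof.
rewrite GamE; split=> [[a [b [c ->]]]|]; first by rewrite /= !dvdz_mulr.
case: y => [[a b] c] /= /and3P[/dvdzP[a' ->] /dvdzP[b' ->] /dvdzP[c' ->]].
by exists a', b', c'; congr (_,_,_); ring.
Qed.

(** * The normal cores C_l *)

Definition Dv (p l : nat) (y : heis) : bool :=
  [&& ((p ^ (2 * l))%N%:Z %| y.1.1)%Z, ((p ^ (2 * l))%N%:Z %| y.1.2)%Z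
    & ((p ^ (2 * l))%N%:Z %| y.2)%Z].

Lemma dvdz_exp_mono p m n : (m <= n)%N -> ((p ^ m)%N%:Z %| (p ^ n)%N%:Z)%Z.
Proof. by move=> mn; rewrite dvdzE !absz_nat dvdn_exp2l. Qed.

Lemma Dv_exists p l y : Dv p l y <->
  exists a b c : int,
    y = ((p ^ (2 * l))%N%:Z * a, (p ^ (2 * l))%N%:Z * b, (p ^ (2 * l))%N%:Z * c).
Proof.
split; last by move=> [a [b [c ->]]]; apply/and3P; split; rewrite /= dvdz_mulr.
case: y => [[a b] c]; rewrite /Dv /= => /and3P[/dvdzP[a' ->] /dvdzP[b' ->] /dvdzP[c' ->]].
by exists a', b', c'; congr (_,_,_); ring.
Qed.

Lemma Dv1 p l : Dv p l hone.
Proof. by apply/and3P; split; rewrite /= dvdz0. Qed.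

Lemma DvM p l x y : Dv p l x -> Dv p l y -> Dv p l (hmul x y).
Proof.
case: x => [[a b] c]; case: y => [[a' b'] c'] /and3P[/= ha hb hc] /and3P[/= ha' hb' hc'].
by apply/and3P; split; rewrite /= ?rpredD // dvdz_mull.
Qed.

Lemma DvV p l x : Dv p l x -> Dv p l (hinv x).
Proof.
case: x => [[a b] c] /and3P[/= ha hb hc].
by apply/and3P; split; rewrite /= ?rpredN ?rpredD ?rpredN // dvdz_mulr.
Qed.

Lemma DvJ p l g x : Dv p l x -> Dv p l (hmul (hmul (hinv g) x) g).
Proof.
rewrite conj_coords => /and3P[ha hb hc]; apply/and3P; split => //=.
by rewrite rpredD ?(rpredB hc) ?(dvdz_mull _ hb) ?(dvdz_mulr _ ha).
Qed.

Lemma Dv_mono p l m y : (l <= m)%N -> Dv p m y -> Dv p l y.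
Proof.
move=> lm /and3P[ha hb hc].
have d : ((p ^ (2 * l))%N%:Z %| (p ^ (2 * m))%N%:Z)%Z.
  by rewrite dvdz_exp_mono // leq_mul2l lm orbT.
by apply/and3P; split; apply: dvdz_trans d _.
Qed.

(** The core of Gamma_l is exactly [Dv p l]: conjugating by (0,1,0) and
    (-1,0,0) shifts the central coordinate by the first and second ones. *)
Lemma core_Dv p l y : core (Gam p l) y <-> Dv p l y.
Proof.
have dvd_ll : ((p ^ l)%N%:Z %| (p ^ (2 * l))%N%:Z)%Z by rewrite dvdz_exp_mono ?leq_pmull.
split=> [H|/and3P[ha hb hc] g]; last first.
  rewrite conj_coords Gam_dvd /=; apply/and3P; split.
  - exact: dvdz_trans dvd_ll ha.
  - exact: dvdz_trans dvd_ll hb.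
  - by rewrite rpredD ?(rpredB hc) ?(dvdz_mull _ hb) ?(dvdz_mulr _ ha).
have /and3P[_ _ hc] := proj1 (Gam_dvd _ _ _) (H hone).
have /and3P[_ _ ha] := proj1 (Gam_dvd _ _ _) (H (0, 1, 0)).
have /and3P[_ _ hb] := proj1 (Gam_dvd _ _ _) (H (-1, 0, 0)).
rewrite conj_coords /= mul0r mulr0 subr0 addr0 in hc.
rewrite conj_coords /= mul0r subr0 mulr1 in ha.
rewrite conj_coords /= mulr0 addr0 mulN1r opprK in hb.
by apply/and3P; split; rewrite // -(rpredDl _ hc).
Qed.

Lemma Gam_not_core p (hp : prime p) l :
  (0 < l)%N -> exists y, Gam p l y /\ ~ core (Gam p l) y.
Proof.
move=> l0; exists ((p ^ l)%N%:Z, 0, 0); split.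
  by apply/GamE; exists 1, 0, 0; rewrite !mulr1 !mulr0.
rewrite core_Dv => /and3P[/= h _ _]; move: h.
rewrite dvdzE !absz_nat dvdn_Pexp2l ?prime_gt1 //.
by rewrite -{2}(mul1n l) ltn_geF // ltn_mul2r l0.
Qed.

(** * Compatible sequences (elements of the completion) *)

Definition Cseq (p : nat) : nat -> heis -> Prop := fun l => core (Gam p l).
Definition compatible (p : nat) := compat (Cseq p).

Lemma compatibleE p x : compatible p x <-> forall l, Dv p l (hmul (hinv (x l)) (x l.+1)).
Proof. by split=> H l; apply/core_Dv; apply: H. Qed.

Lemma compatible_const p h : compatible p (fun _ => h).
Proof. by apply/compatibleE => l; rewrite hmulVl; apply: Dv1. Qed.

Lemma compatibleM p x y : compatible p x -> compatible p y -> compatible p (smul x y).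
Proof.
move=> /compatibleE hx /compatibleE hy; apply/compatibleE => l.
by rewrite /smul quot_mul; apply: DvM; [apply: DvJ|].
Qed.

Lemma compatibleV p x : compatible p x -> compatible p (sinv x).
Proof.
move=> /compatibleE hx; apply/compatibleE => l.
by rewrite /sinv quot_inv; apply: DvJ; apply: DvV.
Qed.

Arguments compatibleM {p x y}. Arguments compatibleV {p x}.

Lemma compatible_le p x l m : compatible p x -> (l <= m)%N ->
  Dv p l (hmul (hinv (x l)) (x m)).
Proof.
move=> /compatibleE hx; elim: m => [|m IH].
  by rewrite leqn0 => /eqP ->; rewrite hmulVl; apply: Dv1.
rewrite leq_eqVlt => /orP[/eqP ->|lm]; first by rewrite hmulVl; apply: Dv1.
by rewrite (quot_trans _ (x m)); apply: DvM; [apply: IH|apply: Dv_mono (hx m)].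
Qed.

Lemma Gam_double_Dv p l y : Gam p (l + l) y -> Dv p l y.
Proof.
rewrite Gam_dvd => /and3P[ha hb hc].
have d1 : ((p ^ (2 * l))%N%:Z %| (p ^ (l + l))%N%:Z)%Z by rewrite mul2n addnn.
have d2 : ((p ^ (2 * l))%N%:Z %| (p ^ (2 * (l + l)))%N%:Z)%Z.
  by rewrite dvdz_exp_mono // leq_mul2l leq_addl orbT.
by apply/and3P; split; [exact: dvdz_trans d1 ha|exact: dvdz_trans d1 hb|exact: dvdz_trans d2 hc].
Qed.

(** x_l = x_(2l) (x_l^-1 x_(2l))^-1 with both factors in C_l. *)
Lemma discriminant_is_trivial p : discriminant_trivial (Gam p) (Cseq p).
Proof.
move=> x hx hG l; apply/core_Dv.
have hq := @compatible_le p x l (l + l)%N hx (leq_addl l l).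
rewrite (mul_quot_inv (x l) (x (l + l)%N)).
by apply: DvM; [apply: Gam_double_Dv|apply: DvV].
Qed.

(** * Lower bound on the Steinitz order: open normal subgroups of index p^e *)

Definition firstDiv p e (x : nat -> heis) :=
  compatible p x /\ ((p ^ e)%N%:Z %| (x e).1.1)%Z.

Lemma Dv_fst p l y : Dv p l y -> ((p ^ l)%N%:Z %| y.1.1)%Z.
Proof. by case/and3P=> h _ _; apply: dvdz_trans h; rewrite dvdz_exp_mono ?leq_pmull. Qed.

Lemma firstDiv_open p e : open_normal (Cseq p) (firstDiv p e).
Proof.
split; first by move=> x [].
split.
  move=> x y hy hxy [hx ha]; split=> //.
  have := @Dv_fst p e _ (proj1 (core_Dv _ _ _) (hxy e)); rewrite fst_hmul fst_hinv => h.
  by have := rpredD ha h; rewrite addNKr.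
split; first by split; [apply: compatible_const|rewrite /sone /= dvdz0].
split.
  by move=> x y [hx ha] [hy hb]; split; [apply: compatibleM|rewrite /smul fst_hmul rpredD].
split; first by move=> x [hx ha]; split; [apply: compatibleV|rewrite /sinv fst_hinv rpredN].
split.
  move=> g x hg [hx ha]; split; first by apply: compatibleM => //; apply: compatibleM => //; apply: compatibleV.
  by rewrite /smul /sinv !fst_hmul fst_hinv addrC addNKr.
by exists e => x hx /core_Dv hd; split=> //; exact: (@Dv_fst p e _ hd).
Qed.

(** The constant sequences (i,0,0), 0 <= i < p^e, form a transversal. *)
Lemma firstDiv_index p e (hp : prime p) : has_index (Cseq p) (firstDiv p e) (p ^ e).
Proof.
have P0 : (0 < (p ^ e)%N%:Z) by rewrite ltz_nat expn_gt0 prime_gt0.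
exists (fun i : 'I_(p ^ e) => fun _ : nat => ((i : nat)%:Z, 0, 0)).
split=> [i|g hg]; first exact: compatible_const.
set a := (g e).1.1.
have m0 : 0 <= (a %% (p ^ e)%N%:Z)%Z by rewrite modz_ge0 // gt_eqF.
have hi : (absz (a %% (p ^ e)%N%:Z)%Z < p ^ e)%N by rewrite -ltz_nat gez0_abs ?ltz_pmod.
have key (j : 'I_(p ^ e)) : firstDiv p e (smul (sinv (fun=> ((j : nat)%:Z, 0, 0))) g)
    <-> (j : nat)%:Z = (a %% (p ^ e)%N%:Z)%Z.
  have hj : ((j : nat)%:Z %% (p ^ e)%N%:Z)%Z = (j : nat)%:Z.
    by rewrite modz_small // ltz_nat ltn_ord andbT.
  rewrite /firstDiv.
  have -> : ((p ^ e)%N%:Z %| (smul (sinv (fun=> ((j : nat)%:Z, 0, 0))) g e).1.1)%Z =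
      (a == (j : nat)%:Z %[mod (p ^ e)%N%:Z])%Z.
    by rewrite /smul /sinv fst_hmul fst_hinv eqz_mod_dvd addrC.
  rewrite hj; split=> [[_ /eqP ->]|->] //.
  split; last exact: eqxx.
  by apply: compatibleM => //; apply: compatibleV; apply: compatible_const.
exists (Ordinal hi); split=> [|j /key hj]; first by apply/key; rewrite /= gez0_abs.
by apply: val_inj => /=; apply/eqP; rewrite -eqz_nat hj gez0_abs.
Qed.

Lemma p_powers_are_indices p (hp : prime p) e :
  exists n, completion_indices (Cseq p) n /\ (e <= logn p n)%N.
Proof.
exists (p ^ e)%N; split; last by rewrite pfactorK.
by exists (firstDiv p e); split; [exact: firstDiv_open|exact: firstDiv_index].
Qed.

(** * Upper bound on the Steinitz order: every index is a power of p *)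

Definition hpow (x : heis) (m : nat) := iter m (fun z => hmul z x) hone.

Lemma hpowE a b c m : hpow (a, b, c) m =
  (m%:Z * a, m%:Z * b, m%:Z * c + ('C(m, 2))%:Z * a * b).
Proof.
elim: m => [|m IH]; first by rewrite /hpow /= !mul0r add0r.
rewrite /hpow iterS -/(hpow _ _) IH /hmul binS bin1 PoszD intS; congr (_,_,_); ring.
Qed.

(** p^(2L) divides binomial(p^(2L+1), 2), also for p = 2. *)
Lemma dvdn_bin2_pow p L (hp : prime p) : (p ^ (2 * L) %| 'C(p ^ (2 * L).+1, 2))%N.
Proof.
case: (even_prime hp) => [->|op].
  rewrite bin2 expnS -mulnA; set k := (_ * _.-1)%N.
  by rewrite [(2 * k)%N]mul2n doubleK /k dvdn_mulr.
rewrite bin2odd; last by rewrite oddX op orbT.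
by rewrite dvdn_mulr // expnS dvdn_mull.
Qed.

Lemma hpow_Dv p L (hp : prime p) x : Dv p L (hpow x (p ^ (2 * L).+1)).
Proof.
case: x => [[a b] c]; rewrite hpowE.
have h1 : ((p ^ (2 * L))%N%:Z %| (p ^ (2 * L).+1)%N%:Z)%Z by rewrite dvdz_exp_mono.
have h2 : ((p ^ (2 * L))%N%:Z %| ('C(p ^ (2 * L).+1, 2))%N%:Z)%Z.
  by rewrite dvdzE !absz_nat dvdn_bin2_pow.
by apply/and3P; split; rewrite /= ?rpredD ?dvdz_mulr.
Qed.

Definition spow (g : nat -> heis) m := iter m (fun z => smul z g) sone.

Lemma spowE g m l : spow g m l = hpow (g l) m.
Proof. by elim: m => [|m IH] //=; rewrite /smul IH. Qed.

Lemma compatible_spow p g m : compatible p g -> compatible p (spow g m).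
Proof. by move=> hg; elim: m => [|m IH] /=; [exact: compatible_const|exact: compatibleM]. Qed.

(** Classical boolean reflection of a proposition, used to define a finite
    set of permutations by a non-decidable predicate. *)
Definition decide (P : Prop) : bool := if excluded_middle_informative P then true else false.
Lemma decideP P : reflect P (decide P).
Proof. by rewrite /decide; case: excluded_middle_informative => h; constructor. Qed.

Lemma quot_cancel a b c d :
  hmul (hinv (hmul (hinv a) (hmul b c))) (hmul (hinv a) (hmul b d)) = hmul (hinv c) d.
Proof. hring. Qed.
Lemma quot_compose a b c d e :
  hmul (hmul (hinv a) (hmul b c)) (hmul (hinv c) (hmul d e)) = hmul (hinv a) (hmul (hmul b d) e).
Proof. hring. Qed.
Lemma quot_one a : hone = hmul (hinv a) (hmul hone a). Proof. hring. Qed.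
Lemma quot_self a : hone = hmul (hinv a) a. Proof. hring. Qed.
Lemma conj_assoc a b : hmul (hmul (hinv a) b) a = hmul (hinv a) (hmul b a). Proof. hring. Qed.
Lemma quot_shift a b : hone = hmul (hinv a) (hmul (hmul a (hinv b)) b). Proof. hring. Qed.

Section CosetAction.

(** An open normal subgroup N of the completion with a transversal t of
    size n; left multiplication by g permutes the cosets t_i N. *)
Variables (p : nat) (N : (nat -> heis) -> Prop) (n : nat) (t : 'I_n -> nat -> heis).
Hypothesis hp : prime p.
Hypothesis N_lim : forall x y, compatible p y -> lim_eq (Cseq p) x y -> N x -> N y.
Hypothesis N_one : N sone.
Hypothesis N_mul : forall {x y}, N x -> N y -> N (smul x y).
Hypothesis N_inv : forall {x}, N x -> N (sinv x).
Hypothesis N_conj : forall {g x}, compatible p g -> N x -> N (smul (smul (sinv g) x) g).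
Variable L : nat.
Hypothesis N_open : forall x, compatible p x -> Cseq p L (x L) -> N x.
Hypothesis t_compat : forall i, compatible p (t i).
Hypothesis t_transversal :
  forall g, compatible p g -> exists! i : 'I_n, N (smul (sinv (t i)) g).
Hypothesis n_gt0 : (0 < n)%N.

Lemma N_ext {x y} : N x -> (forall l, x l = y l) -> compatible p y -> N y.
Proof. by move=> hx e hy; apply: N_lim hx => // l; rewrite e -quot_self; apply/core_Dv/Dv1. Qed.

Lemma t_uniq y j k : compatible p y ->
  N (smul (sinv (t j)) y) -> N (smul (sinv (t k)) y) -> j = k.
Proof. by move=> hy hj hk; case: (t_transversal _ hy) => i [_ U]; rewrite -(U j hj) -(U k hk). Qed.

Let i0 := Ordinal n_gt0.

Definition act g i := epsilon (inhabits i0) (fun j => N (smul (sinv (t j)) (smul g (t i)))).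

Lemma act_spec g i : compatible p g -> N (smul (sinv (t (act g i))) (smul g (t i))).
Proof.
move=> hg; apply: (epsilon_spec (inhabits i0) (fun j => N (smul (sinv (t j)) (smul g (t i))))).
by case: (t_transversal _ (compatibleM hg (t_compat i))) => j [hj _]; exists j.
Qed.

Lemma act_uniq g i j : compatible p g -> N (smul (sinv (t j)) (smul g (t i))) -> act g i = j.
Proof.
move=> hg hj; apply: (t_uniq (smul g (t i))) => //.
  exact: compatibleM hg (t_compat i).
exact: act_spec.
Qed.

Lemma act_inj g : compatible p g -> injective (act g).
Proof.
move=> hg i i' e; have h1 := act_spec g i hg; have h2 := act_spec g i' hg; rewrite e in h1.
apply: (t_uniq (t i')); first exact: t_compat.
  apply: (N_ext (N_mul (N_inv h1) h2)) => [l|]; first exact: quot_cancel.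
  exact: compatibleM (compatibleV (t_compat i)) (t_compat i').
apply: (N_ext N_one) => [l|]; first exact: quot_self.
exact: compatibleM (compatibleV (t_compat i')) (t_compat i').
Qed.

Lemma act_comp g h i : compatible p g -> compatible p h -> act g (act h i) = act (smul g h) i.
Proof.
move=> hg hh; symmetry; apply: act_uniq; first exact: compatibleM.
apply: (N_ext (N_mul (act_spec g (act h i) hg) (act_spec h i hh))) => [l|]; first exact: quot_compose.
exact: compatibleM (compatibleV (t_compat _)) (compatibleM (compatibleM hg hh) (t_compat i)).
Qed.

Lemma act_one i : act sone i = i.
Proof.
apply: act_uniq; first exact: compatible_const.
apply: (N_ext N_one) => [l|]; first exact: quot_one.
exact: compatibleM (compatibleV (t_compat i)) (compatibleM (compatible_const p hone) (t_compat i)).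
Qed.

(** g^(p^(2L+1)) has all terms in C_L, so it lies in N; as N is normal,
    this power fixes every coset. *)
Lemma act_pow g i : compatible p g -> act (spow g (p ^ (2 * L).+1)) i = i.
Proof.
move=> hg; have hgM := compatible_spow p g (p ^ (2 * L).+1) hg.
apply: act_uniq => //.
have hN : N (spow g (p ^ (2 * L).+1)).
  by apply: N_open => //; apply/core_Dv; rewrite spowE; apply: hpow_Dv.
apply: (N_ext (N_conj (t_compat i) hN)) => [l|]; first exact: conj_assoc.
exact: compatibleM (compatibleV (t_compat i)) (compatibleM hgM (t_compat i)).
Qed.

Definition actGroupSet : {set {perm 'I_n}} :=
  [set s : {perm 'I_n} | decide (exists g, compatible p g /\ forall i, s i = act g i)].

Lemma actGroupSet_group : group_set actGroupSet.
Proof.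
apply/group_setP; split.
  rewrite inE; apply/decideP; exists sone; split; first exact: compatible_const.
  by move=> i; rewrite perm1 act_one.
move=> s1 s2; rewrite !inE => /decideP[g1 [h1 e1]] /decideP[g2 [h2 e2]]; apply/decideP.
exists (smul g2 g1); split; first exact: compatibleM.
by move=> i; rewrite permM e1 e2 act_comp.
Qed.

Let actGroup := Group actGroupSet_group.

(** By Cauchy, an element of prime order q has q | p^(2L+1), hence q = p. *)
Lemma actGroup_pgroup : (p.-group actGroup)%g.
Proof.
apply/pgroupP => q pq qd; case: (Cauchy pq qd) => x xG ox.
move: xG; rewrite inE => /decideP[g [hg eg]].
have xk k i : (x ^+ k)%g i = act (spow g k) i.
  elim: k i => [|k IH] i; first by rewrite expg0 perm1 act_one.
  by rewrite expgS permM eg IH act_comp //; exact: compatible_spow.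
have : (x ^+ (p ^ (2 * L).+1) == 1)%g by apply/eqP/permP => i; rewrite perm1 xk act_pow.
by rewrite -order_dvdn ox Euclid_dvdX // andbT dvdn_prime2.
Qed.

(** t_j t_(i0)^-1 sends the coset of t_(i0) to that of t_j. *)
Lemma actGroup_transitive : orbit 'P actGroup i0 = [set: 'I_n].
Proof.
apply/setP => j; rewrite inE; apply/orbitP.
pose g := smul (t j) (sinv (t i0)).
have hg : compatible p g := compatibleM (t_compat j) (compatibleV (t_compat i0)).
exists (perm (act_inj g hg)); first by rewrite inE; apply/decideP; exists g; split=> // i; exact: permE.
rewrite /= apermE permE; apply: act_uniq => //.
apply: (N_ext N_one) => [l|]; first exact: quot_shift.
exact: compatibleM (compatibleV (t_compat j)) (compatibleM hg (t_compat i0)).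
Qed.

(** The orbit of a p-group has p-power size. *)
Lemma index_pnat : p.-nat n.
Proof.
have : (n %| #|actGroup|)%N.
  by rewrite -{1}(card_ord n) -cardsT -actGroup_transitive card_orbit dvdn_indexg.
by move/pnat_dvd; apply; rewrite -pgroupE actGroup_pgroup.
Qed.

End CosetAction.

Lemma completion_index_pnat p (hp : prime p) n :
  completion_indices (Cseq p) n -> (0 < n)%N -> p.-nat n.
Proof.
move=> [N [[_ [Nlim [N1 [NM [NV [NJ [L HL]]]]]]] [t [Ht Hu]]]] n0.
exact: (@index_pnat p N n t hp Nlim N1 NM NV NJ L HL Ht Hu n0).
Qed.

Lemma steinitz_p_infty p (hp : prime p) : completion_steinitz (Cseq p) (p_infty p).
Proof.
move=> q pq; rewrite /p_infty; case: eqP => [->|nq]; first exact: p_powers_are_indices.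
split=> // n hn; case: (posnP n) => [->|n0]; first by rewrite logn0.
have pn := completion_index_pnat p hp n hn n0.
rewrite lognE; case: (boolP (q %| n)%N) => qd; last by rewrite !andbF.
by have := pnat_dvd qd pn; rewrite pnatE // inE => /eqP qp; case: nq.
Qed.

Theorem mainTheorem8 (p : nat) (hp : prime p) :
  (forall x y, phi p (hmul x y) = hmul (phi p x) (phi p y)) /\
      injective (phi p) /\
      (forall (l : nat) (y : heis), Gam p l y <->
         exists a b c : int, y = ((p ^ l)%N%:Z * a, (p ^ l)%N%:Z * b, (p ^ (2 * l))%N%:Z * c)) /\
      (forall (l : nat) (y : heis), core (Gam p l) y <->
         exists a b c : int,
           y = ((p ^ (2 * l))%N%:Z * a, (p ^ (2 * l))%N%:Z * b, (p ^ (2 * l))%N%:Z * c)) /\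
      completion_steinitz (fun l => core (Gam p l)) (p_infty p) /\
      (forall l : nat, (0 < l)%N -> exists y, Gam p l y /\ ~ core (Gam p l) y) /\
      discriminant_trivial (Gam p) (fun l => core (Gam p l)).
Proof.
have p0 : p%:Z != 0 by rewrite eqz_nat -lt0n prime_gt0.
split; first by move=> x y; hring.
split.
  move=> [[a b] c] [[a' b'] c'] [/(mulfI p0) -> /(mulfI p0) ->].
  by move/(mulfI (expf_neq0 2 p0)) ->.
split; first exact: GamE.
split; first by move=> l y; rewrite core_Dv; exact: Dv_exists.
split; first exact: steinitz_p_infty.
split; first exact: Gam_not_core.
exact: discriminant_is_trivial.
Qed.
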